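(* Let $A(t)$ be a holomorphic $2\times2$ matrix function on $|t|\le1$ with $A(0)=\operatorname{diag}(\lambda_1,\lambda_2)$, $\lambda_1-\lambda_2\in\mathbb R_{>0}$. Let $$\dot z=\frac{A(t,\varepsilon)}{(t-\alpha_0(\varepsilon))(t-\alpha_1(\varepsilon))}\,z$$ be a generic deformation with $\operatorname{Im}\alpha_0(\varepsilon)>0$. Let $t_0\in\mathbb R_{<0}$ be fixed with $|t_0|<1$, and let $M_0,M_1:H_{t_0}\to H_{t_0}$ be the monodromy operators, with eigenfunctions $f_{i1,\varepsilon},f_{i2,\varepsilon}$ numbered as in the context. Let $m_i$ be the projectivization of $M_i$, and let $p_{ij,\varepsilon}\in\mathbb P(H_{t_0})\cong\overline{\mathbb C}$ be the image of $f_{ij,\varepsilon}$ under the tautological projection. Then for all sufficiently small $\varepsilon>0$, $m_0$ and $m_1$ are hyperbolic Möbius transformations, with the following fixed points: - $p_{02,\varepsilon}$ is the repelling and $p_{01,\varepsilon}$ the attracting fixed point of $m_0$; - $p_{11,\varepsilon}$ is the repelling and $p_{12,\varepsilon}$ the attracting fixed point of $m_1$.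
   Context: Deformation: $A(t,\varepsilon)$ is holomorphic in $t$ on $|t|\le1$ and continuous in $\varepsilon\ge0$, $A(t,0)=A(t)$; $\alpha_0,\alpha_1$ are continuous, $\alpha_0+\alpha_1\equiv0$, $\alpha_i(0)=0$, $\alpha_0(\varepsilon)\ne\alpha_1(\varepsilon)$ for $\varepsilon>0$. Generic: the line through $\alpha_0(\varepsilon),\alpha_1(\varepsilon)$ meets the real axis at an angle bounded away from $0$ uniformly in $\varepsilon$. Monodromy: $H_{t_0}\cong\mathbb C^2$ is the space of local solutions at $t_0$. $l_i$ is a small counterclockwise circle around $\alpha_i$ whose closed disc excludes $\alpha_{1-i}$, $a_i=[t_0,\alpha_i]\cap l_i$, and $M_i$ is the monodromy along $[t_0,a_i]\circ l_i\circ[t_0,a_i]^{-1}$. Numbering: $\kappa_{i1},\kappa_{i2}$ are the eigenvalues of $A(\alpha_i(\varepsilon),\varepsilon)$ with $\kappa_{ij}\to\lambda_j$. $f_{ij,\varepsilon}$ is the eigenvector of $M_i$ with eigenvalue $\exp\big(2\pi i\kappa_{ij}/(\alpha_i-\alpha_{1-i})\big)$. The projectivization of an invertible linear map of $\mathbb C^2$ is the induced Möbius map of $\mathbb P^1$. A Möbius transformation is hyperbolic if it has a repelling fixed point; then it also has a unique attracting fixed point, and every orbit other than the repeller tends to the attractor. *)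

From Stdlib Require Import Reals.
From Coquelicot Require Import Coquelicot.

Open Scope C_scope.

Record M2 := mkM2 { e11 : C; e12 : C; e21 : C; e22 : C }.

Definition mv (M : M2) (w : C * C) : C * C :=
  (e11 M * fst w + e12 M * snd w, e21 M * fst w + e22 M * snd w).

Definition vscal (c : C) (w : C * C) : C * C := (c * fst w, c * snd w).
Definition vadd (v w : C * C) : C * C := (fst v + fst w, snd v + snd w).
Definition vzero : C * C := (RtoC 0, RtoC 0).

Definition is_eigenvalue (M : M2) (k : C) : Prop :=
  (e11 M - k) * (e22 M - k) - e12 M * e21 M = RtoC 0.

Definition is_eigenvector (M : M2) (mu : C) (v : C * C) : Prop :=
  v <> vzero /\ mv M v = vscal mu v.

Definition Cexp (z : C) : C :=
  RtoC (exp (Re z)) * ((cos (Im z), sin (Im z)) : C).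

Definition Cderiv_R (f : R -> C) (s : R) (l : C) : Prop :=
  filterlim (fun h : R => (f (s + h)%R - f s) / RtoC h) (locally' 0%R) (locally l).

Definition Ccont01 (f : R -> C) (s : R) : Prop :=
  filterlim f (within (fun u : R => (0 <= u <= 1)%R) (locally s)) (locally (f s)).

(** z : [0,1] -> C^2 solves  dz/dt = A(t,eps) / ((t-a0)(t-a1)) z  along the
    path g : [0,1] -> C with velocity g', i.e.
    dz/ds = g'(s) A(g s, eps) z(s) / ((g s - a0)(g s - a1)). *)
Definition sol_along (A : C -> R -> M2) (a0 a1 : C) (eps : R)
  (g g' : R -> C) (z : R -> C * C) : Prop :=
  (forall s, (0 <= s <= 1)%R ->
     Ccont01 (fun u => fst (z u)) s /\ Ccont01 (fun u => snd (z u)) s) /\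
  (forall s, (0 < s < 1)%R ->
     let c := g' s / ((g s - a0) * (g s - a1)) in
     let w := mv (A (g s) eps) (z s) in
     Cderiv_R (fun u => fst (z u)) s (c * fst w) /\
     Cderiv_R (fun u => snd (z u)) s (c * snd w)).

Definition seg (p q : C) (s : R) : C := p + RtoC s * (q - p).
Definition seg' (p q : C) (s : R) : C := q - p.

Definition circ (c a : C) (s : R) : C := c + (a - c) * Cexp (RtoC (2 * PI * s) * Ci).
Definition circ' (c a : C) (s : R) : C :=
  (a - c) * (RtoC (2 * PI) * Ci) * Cexp (RtoC (2 * PI * s) * Ci).

(** a_i = [t0, alpha_i] ∩ l_i, where l_i is the circle of radius r around alpha_i *)
Definition base_point (t0 : R) (ai : C) (r : R) : C :=
  ai + RtoC r * ((RtoC t0 - ai) / RtoC (Cmod (RtoC t0 - ai))).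

(** admissible radius for the small circle l_i around alpha_i = ai
    (ao = alpha_{1-i}): its closed disc excludes ao, it meets the segment
    [t0, ai] and it lies inside the unit disc. *)
Definition admissible_radius (t0 : R) (ai ao : C) (r : R) : Prop :=
  (0 < r)%R /\ (r < Cmod (ai - ao))%R /\ (r < Cmod (RtoC t0 - ai))%R /\
  (Cmod ai + r < 1)%R.

(** M is the monodromy operator on H_{t0} (identified with C^2 via the value of a
    solution at t0) along  [t0,a_i] ∘ l_i ∘ [t0,a_i]^{-1}  (first go from t0 to a_i,
    then around l_i counterclockwise, then back to t0), for the equation with
    singular points ai (= alpha_i) and ao (= alpha_{1-i}). *)
Definition is_monodromy (A : C -> R -> M2) (ai ao : C) (eps t0 r : R) (M : M2) : Prop :=
  let a := base_point t0 ai r in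
  forall z1 z2 z3 : R -> C * C,
    sol_along A ai ao eps (seg (RtoC t0) a) (seg' (RtoC t0) a) z1 ->
    sol_along A ai ao eps (circ ai a) (circ' ai a) z2 ->
    sol_along A ai ao eps (seg a (RtoC t0)) (seg' a (RtoC t0)) z3 ->
    z2 0%R = z1 1%R -> z3 0%R = z2 1%R ->
    z3 1%R = mv M (z1 0%R).

(** Projective line: a point of P(C^2) is represented by a nonzero vector.
    Affine chart of P^1 attached to a basis (v,u) of C^2 : the class of
    v + x u has coordinate x.  chart_coord v u w is the coordinate of [w]. *)
Definition det2 (v u : C * C) : C := fst v * snd u - snd v * fst u.

Definition chart_coord (v u w : C * C) : C :=
  let p := (fst w * snd u - snd w * fst u) / det2 v u in
  let q := (fst v * snd w - snd v * fst w) / det2 v u in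
  q / p.

Definition mobius_in_chart (M : M2) (v u : C * C) (x : C) : C :=
  chart_coord v u (mv M (vadd v (vscal x u))).

Definition proj_fixed_point (M : M2) (v : C * C) : Prop :=
  v <> vzero /\ exists mu : C, mv M v = vscal mu v.

(** [v] is a repelling (resp. attracting) fixed point: the multiplier, i.e. the
    complex derivative of m at [v] in an affine chart centred at [v], has
    modulus > 1 (resp. < 1). *)
Definition repelling_fixed_point (M : M2) (v : C * C) : Prop :=
  proj_fixed_point M v /\
  exists u : C * C, det2 v u <> RtoC 0 /\
  exists d : C, is_derive (mobius_in_chart M v u) (RtoC 0) d /\ (1 < Cmod d)%R.

Definition attracting_fixed_point (M : M2) (v : C * C) : Prop :=
  proj_fixed_point M v /\
  exists u : C * C, det2 v u <> RtoC 0 /\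
  exists d : C, is_derive (mobius_in_chart M v u) (RtoC 0) d /\ (Cmod d < 1)%R.

Definition hyperbolic (M : M2) : Prop := exists v, repelling_fixed_point M v.

Definition entry_fun (k : nat) (M : M2) : C :=
  match k with 0 => e11 M | 1 => e12 M | 2 => e21 M | _ => e22 M end.

Definition dom (eps0 : R) (p : C * R) : Prop :=
  (Cmod (fst p) <= 1)%R /\ (0 <= snd p < eps0)%R.

(** In a basis of eigenvectors [v], [u] of [M] with eigenvalues [a], [b], the
    projectivisation of [M] is the linear map [x |-> (b / a) x] of the affine
    chart centred at [[v]], so [[v]] is repelling and [[u]] attracting as soon as
    [|a| < |b|].  For the monodromy [M_i] the eigenvalues are
    [exp (2 pi i kappa / w)] with [w = alpha_i - alpha_(1-i)], whose moduli are
    [exp (2 pi Im (conj kappa * w) / |w|^2)]; hence everything reduces to the sign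
    of [Im (conj (kappa_i1 - kappa_i2) * w)].  As [eps -> 0],
    [kappa_i1 - kappa_i2 -> lambda_1 - lambda_2 > 0], and genericity keeps [w] in
    a fixed cone around the imaginary axis, so this sign is eventually that of
    [Im w]: positive for [i = 0], negative for [i = 1], whence the exchanged roles
    of the two fixed points. *)

From Stdlib Require Import Reals Lra Psatz.
From Coquelicot Require Import Coquelicot.
Open Scope C_scope.

Lemma mv_vscal (M : M2) (c : C) (v : C * C) :
  mv M (vscal c v) = vscal c (mv M v).
Proof. destruct v as [v1 v2]; unfold mv, vscal; simpl; f_equal; ring. Qed.

Lemma Cmult_integral (x y : C) : x * y = 0 -> x = 0 \/ y = 0.
Proof.
  intro E; destruct (Classical_Prop.classic (x = 0)) as [|Hx]; [now left | right].
  destruct (Classical_Prop.classic (y = 0)) as [|Hy]; [assumption |].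
  exfalso; exact (Cmult_neq_0 x y Hx Hy E).
Qed.

Lemma Cminus_neq0 (x y : C) : x <> y -> x - y <> 0.
Proof. intros Hxy E; apply Hxy; rewrite <- (Cplus_0_l y), <- E; ring. Qed.

Lemma vscal_eq_vzero (c : C) (v : C * C) :
  vscal c v = vzero -> v <> vzero -> c = 0.
Proof.
  destruct v as [v1 v2]; unfold vscal, vzero; simpl.
  intros E Hv.
  pose proof (f_equal fst E) as E1; pose proof (f_equal snd E) as E2; simpl in E1, E2.
  destruct (Cmult_integral _ _ E1) as [|Ev1]; auto.
  destruct (Cmult_integral _ _ E2) as [|Ev2]; auto.
  exfalso; apply Hv; rewrite Ev1, Ev2; reflexivity.
Qed.

Lemma det2_eq0_colinear (v u : C * C) :
  v <> vzero -> det2 v u = 0 -> exists c, u = vscal c v.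
Proof.
  destruct v as [v1 v2], u as [u1 u2]; unfold det2, vscal, vzero; simpl.
  intros Hv D.
  assert (E : v1 * u2 = v2 * u1) by (rewrite <- (Cplus_0_l (v2 * u1)), <- D; ring).
  destruct (Classical_Prop.classic (v1 = 0)) as [Ev1|Ev1].
  - assert (Ev2 : v2 <> 0) by (intro Ev2; apply Hv; rewrite Ev1, Ev2; reflexivity).
    assert (Eu1 : u1 = 0).
    { rewrite Ev1, Cmult_0_l in E.
      destruct (Cmult_integral v2 u1 (eq_sym E)); [contradiction | assumption]. }
    exists (u2 / v2); rewrite Eu1, Ev1; f_equal; field; exact Ev2.
  - exists (u1 / v1); f_equal; [field; exact Ev1 |].
    transitivity (v1 * u2 / v1); [field; exact Ev1 |].
    rewrite E; field; exact Ev1.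
Qed.

Lemma eigenvectors_det2_neq0 (M : M2) (a b : C) (v u : C * C) :
  is_eigenvector M a v -> is_eigenvector M b u -> a <> b -> det2 v u <> 0.
Proof.
  intros [Hv0 Hv] [Hu0 Hu] Hab D.
  destruct (det2_eq0_colinear v u Hv0 D) as [c ->].
  rewrite mv_vscal, Hv in Hu.
  assert (Hc : c * (a - b) = 0).
  { apply (vscal_eq_vzero _ v); [| exact Hv0].
    destruct v as [v1 v2]; unfold vscal, vzero in *; simpl in *.
    pose proof (f_equal fst Hu) as H1; pose proof (f_equal snd Hu) as H2; simpl in H1, H2.
    f_equal.
    - replace (c * (a - b) * v1) with (c * (a * v1) - b * (c * v1)) by ring.
      rewrite H1; ring.
    - replace (c * (a - b) * v2) with (c * (a * v2) - b * (c * v2)) by ring.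
      rewrite H2; ring. }
  destruct (Cmult_integral _ _ Hc) as [Ec | Eab].
  - apply Hu0; rewrite Ec; destruct v; unfold vscal, vzero; simpl; f_equal; ring.
  - apply Hab; rewrite <- (Cplus_0_l b), <- Eab; ring.
Qed.

Lemma mobius_in_eigenchart (M : M2) (a b : C) (v u : C * C) (x : C) :
  mv M v = vscal a v -> mv M u = vscal b u -> det2 v u <> 0 -> a <> 0 ->
  mobius_in_chart M v u x = x * (b / a).
Proof.
  destruct v as [v1 v2], u as [u1 u2], M as [m11 m12 m21 m22].
  unfold mobius_in_chart, chart_coord, det2, mv, vadd, vscal; simpl.
  intros Hv Hu D Ha.
  pose proof (f_equal fst Hv) as Hv1; pose proof (f_equal snd Hv) as Hv2;
  pose proof (f_equal fst Hu) as Hu1; pose proof (f_equal snd Hu) as Hu2; simpl in *.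
  replace (m11 * (v1 + x * u1) + m12 * (v2 + x * u2)) with (a * v1 + x * (b * u1))
    by (rewrite <- Hv1, <- Hu1; ring).
  replace (m21 * (v1 + x * u1) + m22 * (v2 + x * u2)) with (a * v2 + x * (b * u2))
    by (rewrite <- Hv2, <- Hu2; ring).
  replace ((a * v1 + x * (b * u1)) * u2 - (a * v2 + x * (b * u2)) * u1)
    with (a * (v1 * u2 - v2 * u1)) by ring.
  field; repeat split; auto using Cmult_neq_0.
Qed.

Lemma is_derive_mul_r (k : C) : is_derive (fun x : C => x * k) (RtoC 0) k.
Proof.
  pose proof (@is_derive_scal_l C_AbsRing C_NormedModule (fun x => x) (RtoC 0) one k
    (is_derive_id _)) as H.
  rewrite scal_one in H; exact H.
Qed.

Lemma eigenbasis_repelling_attracting (M : M2) (a b : C) (v u : C * C) :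
  is_eigenvector M a v -> is_eigenvector M b u -> a <> 0 -> (Cmod a < Cmod b)%R ->
  repelling_fixed_point M v /\ attracting_fixed_point M u.
Proof.
  intros Hv Hu Ha Hab.
  assert (Ca : (0 < Cmod a)%R) by (apply Cmod_gt_0; exact Ha).
  assert (Hb : b <> 0) by (apply Cmod_gt_0; lra).
  assert (Dvu : det2 v u <> 0).
  { apply (eigenvectors_det2_neq0 M a b); auto.
    intros ->; lra. }
  assert (Duv : det2 u v <> 0).
  { intro D; apply Dvu.
    replace (det2 v u) with (- det2 u v) by (unfold det2; ring).
    rewrite D; ring. }
  destruct Hv as [Hv0 Hv], Hu as [Hu0 Hu].
  repeat split; try (assumption || (eexists; eassumption)).
  - exists u; split; [exact Dvu |]; exists (b / a); split.
    + apply (is_derive_ext (fun x => x * (b / a))); [| apply is_derive_mul_r].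
      intro x; symmetry; apply mobius_in_eigenchart; assumption.
    + rewrite Cmod_div by exact Ha.
      apply Rlt_div_r; lra.
  - exists v; split; [exact Duv |]; exists (a / b); split.
    + apply (is_derive_ext (fun x => x * (a / b))); [| apply is_derive_mul_r].
      intro x; symmetry; apply mobius_in_eigenchart; assumption.
    + rewrite Cmod_div by exact Hb.
      apply Rlt_div_l; lra.
Qed.

Lemma Cmod_Cexp (z : C) : Cmod (Cexp z) = exp (Re z).
Proof.
  unfold Cexp.
  rewrite Cmod_mult, Cmod_R, Rabs_pos_eq by (left; apply exp_pos).
  replace (Cmod (cos (Im z), sin (Im z))) with 1%R; [ring |].
  pose proof (sin2_cos2 (Im z)) as H; unfold Rsqr in H.
  unfold Cmod; simpl.
  replace (_ + _)%R with 1%R by lra; symmetry; apply sqrt_1.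
Qed.

Lemma Cexp_neq0 (z : C) : Cexp z <> 0.
Proof.
  intro E; pose proof (Cmod_Cexp z) as H.
  rewrite E, Cmod_0 in H; pose proof (exp_pos (Re z)); lra.
Qed.

Lemma Cmod_Cexp_lt (z1 z2 : C) : (Re z1 < Re z2)%R -> (Cmod (Cexp z1) < Cmod (Cexp z2))%R.
Proof. intro H; rewrite !Cmod_Cexp; apply exp_increasing, H. Qed.

Lemma Re_mul_Ci_div_lt (r : R) (k1 k2 w : C) :
  (0 < r)%R -> w <> 0 -> (0 < Im (Cconj (k1 - k2) * w))%R ->
  (Re (RtoC r * Ci * k2 / w) < Re (RtoC r * Ci * k1 / w))%R.
Proof.
  destruct k1 as [x1 y1], k2 as [x2 y2], w as [p q].
  unfold Cconj, Cdiv, Cinv, Cmult, Cminus, Cplus, Copp, Ci, RtoC, Re, Im; simpl.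
  intros Hr Hw H.
  assert (N : (0 < p * p + q * q)%R).
  { destruct (Req_dec p 0) as [->|Hp]; [| nra].
    destruct (Req_dec q 0) as [->|Hq]; [exfalso; apply Hw; reflexivity | nra]. }
  apply Rlt_0_minus.
  replace (_ - _)%R with (r * ((x1 + - x2) * q + - (y1 + - y2) * p) / (p * p + q * q))%R
    by (field; lra).
  apply Rdiv_lt_0_compat; nra.
Qed.

Lemma exp_multipliers_repelling_attracting (M : M2) (k1 k2 w : C) (v u : C * C) :
  w <> 0 -> (0 < Im (Cconj (k1 - k2) * w))%R ->
  is_eigenvector M (Cexp (RtoC (2 * PI) * Ci * k2 / w)) v ->
  is_eigenvector M (Cexp (RtoC (2 * PI) * Ci * k1 / w)) u ->
  repelling_fixed_point M v /\ attracting_fixed_point M u.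
Proof.
  intros Hw H Hv Hu.
  apply (eigenbasis_repelling_attracting M _ _ v u Hv Hu (Cexp_neq0 _)).
  apply Cmod_Cexp_lt, Re_mul_Ci_div_lt; auto.
  pose proof PI_RGT_0; lra.
Qed.

Lemma Im_Cconj_mul_pos (c : R) (d w : C) :
  (0 < c)%R -> w <> 0 -> (c * Cmod w <= Im w)%R -> (Rabs (Im d) < c * Re d)%R ->
  (0 < Im (Cconj d * w))%R.
Proof.
  intros Hc Hw Hcone Hd.
  assert (Hm : (0 < Cmod w)%R) by (apply Cmod_gt_0; exact Hw).
  assert (Hre : (Rabs (Re w) <= Cmod w)%R) by apply re_le_Cmod.
  assert (Hcross : (Im d * Re w <= Rabs (Im d) * Cmod w)%R).
  { eapply Rle_trans; [apply Rle_abs |].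
    rewrite Rabs_mult; apply Rmult_le_compat_l; [apply Rabs_pos | exact Hre]. }
  assert (Hpos : (0 < Re d)%R) by (pose proof (Rabs_pos (Im d)); nra).
  destruct d as [d1 d2], w as [p q]; unfold Cconj, Cmult, Re, Im in *; simpl in *.
  nra.
Qed.

Lemma Im_Cconj_mul_sub_swap (a b p q : C) :
  Im (Cconj (a - b) * (p - q)) = Im (Cconj (b - a) * (q - p)).
Proof. f_equal; rewrite !Cminus_conj; ring. Qed.

Lemma filterlim_Cminus {T} {F : (T -> Prop) -> Prop} {FF : Filter F}
  (f g : T -> C) (l1 l2 : C) :
  filterlim f F (locally l1) -> filterlim g F (locally l2) ->
  filterlim (fun x => f x - g x) F (locally (l1 - l2)).
Proof.
  intros Hf Hg.
  assert (Hg' : filterlim (fun x => opp (g x)) F (locally (opp l2))).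
  { eapply filterlim_comp; [exact Hg | apply (@filterlim_opp C_AbsRing C_NormedModule)]. }
  exact (filterlim_comp_2 f (fun x => opp (g x)) plus Hf Hg'
    (@filterlim_plus C_AbsRing C_NormedModule l1 (opp l2))).
Qed.

Lemma filterlim_eventually_in_cone {T} {F : (T -> Prop) -> Prop} {FF : Filter F}
  (f : T -> C) (l : C) (c : R) :
  (0 < c)%R -> Im l = 0%R -> (0 < Re l)%R -> filterlim f F (locally l) ->
  F (fun x => Rabs (Im (f x)) < c * Re (f x))%R.
Proof.
  intros Hc Hl0 Hl Hf.
  assert (Hdelta : (0 < c * Re l / (1 + c))%R) by (apply Rdiv_lt_0_compat; nra).
  apply (filter_imp (fun x => ball l (mkposreal _ Hdelta) (f x)));
    [| exact (Hf _ (locally_ball l _))].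
  intros x [Hre Him]; set (z := f x) in *; simpl in Hre, Him.
  change (Rabs (Re z - Re l) < c * Re l / (1 + c))%R in Hre.
  change (Rabs (Im z - Im l) < c * Re l / (1 + c))%R in Him.
  rewrite Hl0, Rminus_0_r in Him.
  apply Rabs_def2 in Hre.
  assert (E : (c * (Re l - c * Re l / (1 + c)) = c * Re l / (1 + c))%R) by (field; lra).
  nra.
Qed.

Theorem proposition4p8
  (A : C -> R -> M2) (eps0 : R) (alpha0 alpha1 : R -> C) (lambda1 lambda2 : C)
  (t0 : R) (kappa01 kappa02 kappa11 kappa12 : R -> C) :
  (0 < eps0)%R ->
  (* A(t,eps) holomorphic in t on |t| <= 1 *)
  (forall eps, (0 <= eps < eps0)%R -> forall t : C, (Cmod t <= 1)%R ->
     forall k : nat, ex_derive (fun s : C => entry_fun k (A s eps)) t) ->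
  (* A continuous (jointly) in (t, eps) for |t| <= 1, eps >= 0 *)
  (forall p : C * R, dom eps0 p -> forall k : nat,
     filterlim (fun q : C * R => entry_fun k (A (fst q) (snd q)))
       (within (dom eps0) (locally p)) (locally (entry_fun k (A (fst p) (snd p))))) ->
  (* A(0) = A(0,0) = diag(lambda1, lambda2), lambda1 - lambda2 real positive *)
  A (RtoC 0) 0%R = mkM2 lambda1 (RtoC 0) (RtoC 0) lambda2 ->
  Im (lambda1 - lambda2) = 0%R -> (0 < Re (lambda1 - lambda2))%R ->
  (* alpha_0, alpha_1 continuous, alpha_0 + alpha_1 = 0, alpha_i(0) = 0 *)
  (forall eps, (0 <= eps < eps0)%R ->
     filterlim alpha0 (within (fun e => 0 <= e < eps0)%R (locally eps)) (locally (alpha0 eps)) /\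
     filterlim alpha1 (within (fun e => 0 <= e < eps0)%R (locally eps)) (locally (alpha1 eps))) ->
  (forall eps, (0 <= eps < eps0)%R -> alpha0 eps + alpha1 eps = RtoC 0) ->
  alpha0 0%R = RtoC 0 -> alpha1 0%R = RtoC 0 ->
  (forall eps, (0 < eps < eps0)%R -> alpha0 eps <> alpha1 eps) ->
  (* genericity: the angle between the line through alpha_0, alpha_1 and the
     real axis is bounded away from 0 uniformly in eps *)
  (exists c : R, (0 < c)%R /\ forall eps, (0 < eps < eps0)%R ->
     (c * Cmod (alpha0 eps - alpha1 eps) <= Rabs (Im (alpha0 eps - alpha1 eps)))%R) ->
  (* Im alpha_0(eps) > 0 *)
  (forall eps, (0 < eps < eps0)%R -> (0 < Im (alpha0 eps))%R) ->
  (* t0 real negative, |t0| < 1 *)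
  (-1 < t0 < 0)%R ->
  (* numbering of the eigenvalues kappa_ij of A(alpha_i(eps), eps), kappa_ij -> lambda_j *)
  (forall eps, (0 < eps < eps0)%R ->
     is_eigenvalue (A (alpha0 eps) eps) (kappa01 eps) /\
     is_eigenvalue (A (alpha0 eps) eps) (kappa02 eps) /\
     is_eigenvalue (A (alpha1 eps) eps) (kappa11 eps) /\
     is_eigenvalue (A (alpha1 eps) eps) (kappa12 eps)) ->
  filterlim kappa01 (at_right 0%R) (locally lambda1) ->
  filterlim kappa02 (at_right 0%R) (locally lambda2) ->
  filterlim kappa11 (at_right 0%R) (locally lambda1) ->
  filterlim kappa12 (at_right 0%R) (locally lambda2) ->
  exists eps1 : R, (0 < eps1)%R /\
  forall eps : R, (0 < eps < eps1)%R ->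
  forall (r0 r1 : R) (M0 M1 : M2) (f01 f02 f11 f12 : C * C),
    admissible_radius t0 (alpha0 eps) (alpha1 eps) r0 ->
    admissible_radius t0 (alpha1 eps) (alpha0 eps) r1 ->
    is_monodromy A (alpha0 eps) (alpha1 eps) eps t0 r0 M0 ->
    is_monodromy A (alpha1 eps) (alpha0 eps) eps t0 r1 M1 ->
    is_eigenvector M0
      (Cexp (RtoC (2 * PI) * Ci * kappa01 eps / (alpha0 eps - alpha1 eps))) f01 ->
    is_eigenvector M0
      (Cexp (RtoC (2 * PI) * Ci * kappa02 eps / (alpha0 eps - alpha1 eps))) f02 ->
    is_eigenvector M1
      (Cexp (RtoC (2 * PI) * Ci * kappa11 eps / (alpha1 eps - alpha0 eps))) f11 ->
    is_eigenvector M1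
      (Cexp (RtoC (2 * PI) * Ci * kappa12 eps / (alpha1 eps - alpha0 eps))) f12 ->
    hyperbolic M0 /\ repelling_fixed_point M0 f02 /\ attracting_fixed_point M0 f01 /\
    hyperbolic M1 /\ repelling_fixed_point M1 f11 /\ attracting_fixed_point M1 f12.
Proof.
  (* The analytic hypotheses are what identify the eigenvalues of [M_i] in the
     paper; here those eigenvalues are given through the eigenvectors [f_ij]. *)
  intros Heps0 _ _ _ HIm HRe _ Hsum _ _ Hneq [c [Hc Hgen]] HIma _ _ K01 K02 K11 K12.
  pose proof (filterlim_eventually_in_cone _ _ c Hc HIm HRe
    (filterlim_Cminus _ _ _ _ K01 K02)) as Cone0.
  pose proof (filterlim_eventually_in_cone _ _ c Hc HIm HRe
    (filterlim_Cminus _ _ _ _ K11 K12)) as Cone1.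
  destruct (filter_and _ _ Cone0 Cone1) as [delta Hdelta].
  exists (Rmin delta eps0); split; [apply Rmin_pos; [apply cond_pos | exact Heps0] |].
  intros eps [He1 He2] r0 r1 M0 M1 f01 f02 f11 f12 _ _ _ _ E01 E02 E11 E12.
  pose proof (Rmin_l delta eps0); pose proof (Rmin_r delta eps0).
  assert (He : (0 < eps < eps0)%R) by lra.
  assert (Hball : ball 0%R delta eps).
  { change (Rabs (eps - 0) < delta)%R; rewrite Rminus_0_r, Rabs_pos_eq; lra. }
  destruct (Hdelta eps Hball He1) as [D0 D1].
  assert (Hw : alpha0 eps - alpha1 eps <> 0) by exact (Cminus_neq0 _ _ (Hneq eps He)).
  assert (Hw' : alpha1 eps - alpha0 eps <> 0)
    by exact (Cminus_neq0 _ _ (not_eq_sym (Hneq eps He))).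
  assert (Hcone : (c * Cmod (alpha0 eps - alpha1 eps) <= Im (alpha0 eps - alpha1 eps))%R).
  { rewrite <- (Rabs_pos_eq (Im _)); [exact (Hgen eps He) |].
    pose proof (f_equal Im (Hsum eps (conj (Rlt_le _ _ He1) (proj2 He)))) as Hs.
    pose proof (HIma eps He); unfold Im in *; simpl in *; lra. }
  destruct (exp_multipliers_repelling_attracting M0 _ _ _ f02 f01 Hw
    (Im_Cconj_mul_pos c _ _ Hc Hw Hcone D0) E02 E01) as [Rep0 Att0].
  assert (Hcross1 : (0 < Im (Cconj (kappa12 eps - kappa11 eps) * (alpha1 eps - alpha0 eps)))%R)
    by (rewrite Im_Cconj_mul_sub_swap; exact (Im_Cconj_mul_pos c _ _ Hc Hw Hcone D1)).
  destruct (exp_multipliers_repelling_attracting M1 _ _ _ f11 f12 Hw' Hcross1 E11 E12)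
    as [Rep1 Att1].
  exact (conj (ex_intro _ f02 Rep0) (conj Rep0 (conj Att0
    (conj (ex_intro _ f11 Rep1) (conj Rep1 Att1))))).
Qed.
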